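(* Let $A\in\mathrm{GL}(n,2)$ have columns $\mathbf{a}_1,\dots,\mathbf{a}_n$, and let $\rho$ be an $n$-qubit density matrix. Define $$F_{\max}(A;\rho):=\max\{\,p(\mathbf{0}) : p\in\Delta(\mathbb{F}_2^n),\ \widehat p(\mathbf{a}_i)=\mu_\rho(\mathbf{a}_i)\ \forall i\in\{1,\dots,n\}\,\}.$$ Then $$F_{\max}(A;\rho)=\frac12+\frac12\min_{i\in\{1,\dots,n\}}\mu_\rho(\mathbf{a}_i).$$
   Context: Setting: $|\psi\rangle$ is an $n$-qubit stabilizer state whose stabilizer group is generated by independent commuting Pauli operators $g_1,\dots,g_n$. For $\mathbf{u}\in\mathbb{F}_2^n$ put $g(\mathbf{u})=\prod_j g_j^{u_j}$. For $\mathbf{s}\in\mathbb{F}_2^n$, the syndrome projectors $\Pi_{\mathbf{s}}=2^{-n}\prod_{j=1}^n(I+(-1)^{s_j}g_j)$ are mutually orthogonal rank-one projectors summing to the identity, with $\Pi_{\mathbf{0}}=|\psi\rangle\langle\psi|$. For a state $\rho$, its syndrome distribution is $p_\rho(\mathbf{s})=\mathrm{tr}(\rho\Pi_{\mathbf{s}})$ and $\mu_\rho(\mathbf{u}):=\mathrm{tr}(\rho\, g(\mathbf{u}))=\widehat{p_\rho}(\mathbf{u})$, where for $p\in\Delta(\mathbb{F}_2^n)$ (probability distributions on $\mathbb{F}_2^n$) the Walsh transform is $\widehat p(\mathbf{u})=\sum_{\mathbf{s}}(-1)^{\mathbf{u}\cdot\mathbf{s}}p(\mathbf{s})$ with $\mathbf{u}\cdot\mathbf{s}$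 the mod-2 inner product. $\mathrm{GL}(n,2)$ is the group of invertible binary $n\times n$ matrices (a ''gauge''); querying gauge $A$ yields the exact values $\mu_\rho(\mathbf{a}_1),\dots,\mu_\rho(\mathbf{a}_n)$. *)

From HB Require Import structures.
From mathcomp Require Import all_boot all_order all_algebra.
Set Implicit Arguments. Unset Strict Implicit. Unset Printing Implicit Defensive.
Import Order.TTheory GRing.Theory Num.Theory.
Local Open Scope ring_scope.

Definition dot2 (n : nat) (u s : 'rV['F_2]_n) : 'F_2 := (u *m s^T) 0 0.

Definition sgn2 (C : pzRingType) (n : nat) (u s : 'rV['F_2]_n) : C :=
  if dot2 u s == 0 then 1 else -1.

Definition walsh (C : pzRingType) (n : nat) (p : {ffun 'rV['F_2]_n -> C})
  (u : 'rV['F_2]_n) : C :=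
  \sum_(s : 'rV['F_2]_n) sgn2 C u s * p s.

(* probability distributions on F_2^n (values in the real part of C) *)
Definition is_distr (C : numClosedFieldType) (n : nat)
  (p : {ffun 'rV['F_2]_n -> C}) : Prop :=
  (forall s, 0 <= p s) /\ \sum_(s : 'rV['F_2]_n) p s = 1.

Definition adjmx (C : numClosedFieldType) (m k : nat) (M : 'M[C]_(m, k))
  : 'M[C]_(k, m) := (map_mx Num.conj M)^T.

Definition hermitian (C : numClosedFieldType) (N : nat) (M : 'M[C]_N) : Prop :=
  adjmx M = M.

Definition density (C : numClosedFieldType) (N : nat) (rho : 'M[C]_N) : Prop :=
  [/\ hermitian rho,
      forall v : 'cV[C]_N, 0 <= (adjmx v *m rho *m v) 0 0
    & \tr rho = 1].

Definition mxprod (C : pzRingType) (N n : nat) (F : 'I_n -> 'M[C]_N) : 'M[C]_N :=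
  foldr (fun j M => F j *m M) 1%:M (enum 'I_n).

Definition gpow (C : pzRingType) (N n : nat) (g : 'I_n -> 'M[C]_N)
  (u : 'rV['F_2]_n) : 'M[C]_N :=
  mxprod (fun j => if u 0 j == 0 then 1%:M else g j).

Definition syndrome_proj (C : numFieldType) (N n : nat) (g : 'I_n -> 'M[C]_N)
  (s : 'rV['F_2]_n) : 'M[C]_N :=
  (2 ^- n) *: mxprod (fun j => 1%:M + (if s 0 j == 0 then 1 else -1) *: g j).

(* Abstract stabilizer generators of an n-qubit stabilizer state:
   Hermitian involutions, pairwise commuting, whose syndrome projectors
   are rank-one (this encodes independence and n generators on 2^n dims). *)
Definition stabilizer_generators (C : numClosedFieldType) (n : nat)
  (g : 'I_n -> 'M[C]_(2 ^ n)) : Prop :=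
  [/\ forall j, hermitian (g j),
      forall j, g j *m g j = 1%:M,
      forall j k, g j *m g k = g k *m g j
    & forall s, \rank (syndrome_proj g s) = 1%N].

Definition mu (C : numClosedFieldType) (n : nat) (g : 'I_n -> 'M[C]_(2 ^ n))
  (rho : 'M[C]_(2 ^ n)) (u : 'rV['F_2]_n) : C :=
  \tr (rho *m gpow g u).

Definition acol (n : nat) (A : 'M['F_2]_n) (i : 'I_n) : 'rV['F_2]_n :=
  (col i A)^T.

Definition feasible (C : numClosedFieldType) (n : nat) (g : 'I_n -> 'M[C]_(2 ^ n))
  (rho : 'M[C]_(2 ^ n)) (A : 'M['F_2]_n) (p : {ffun 'rV['F_2]_n -> C}) : Prop :=
  is_distr p /\ forall i : 'I_n, walsh p (acol A i) = mu g rho (acol A i).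

Definition is_Fmax (C : numClosedFieldType) (n : nat) (g : 'I_n -> 'M[C]_(2 ^ n))
  (rho : 'M[C]_(2 ^ n)) (A : 'M['F_2]_n) (v : C) : Prop :=
  (exists2 p, feasible g rho A p & p 0 = v) /\
  (forall p, feasible g rho A p -> p 0 <= v).

Definition is_min_of (C : numClosedFieldType) (n : nat) (f : 'I_n -> C) (m : C)
  : Prop :=
  (exists i, f i = m) /\ (forall i, m <= f i).

From HB Require Import structures.
From mathcomp Require Import all_boot all_order all_algebra.
From mathcomp Require Import ring.
Import Order.TTheory GRing.Theory Num.Theory.
Local Open Scope ring_scope.

(* Every distribution p satisfies 2 p(0) <= 1 + p^(u), since the mass of the
   hyperplane u.s = 0 is (1 + p^(u))/2; for u = a_i with mu(a_i) minimal this is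
   the upper bound.  Conversely, |mu(u)| <= 1 because g(u) is a Hermitian
   involution, and the bound is attained in the coordinates t = s A, where
   p^(a_i) becomes the bias of the i-th bit of t: mix the point mass at 0
   (weight (1 + m)/2) with a product of independent bits whose i-th bit is 1
   with probability y_i = (1 - mu(a_i))/(1 - m), so that the bit of minimal
   bias is always 1 and the product part puts no mass on 0. *)

Lemma F2_cases (b : 'F_2) : b = 0 \/ b = 1.
Proof. by case: b => [[|[|//]]] ?; [left | right]; apply: val_inj. Qed.

Lemma sum_F2 {V : nmodType} (F : 'F_2 -> V) : \sum_(b : 'F_2) F b = F 0 + F 1.
Proof.
by rewrite (@big_ord_recl _ _ _ 1 F) big_ord1; congr (F _ + F _); apply: val_inj.
Qed.

Lemma sum_rV_F2_prod {R : comPzSemiRingType} {n} (f : 'I_n -> 'F_2 -> R) :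
  \sum_(t : 'rV['F_2]_n) \prod_k f k (t 0 k) = \prod_k (f k 0 + f k 1).
Proof.
rewrite -(eq_bigr _ (fun k _ => sum_F2 (f k))) bigA_distr_bigA /=.
rewrite (reindex (fun t : 'rV['F_2]_n => [ffun k => t 0 k])) /=.
  by apply: eq_bigr => t _; apply: eq_bigr => k _; rewrite ffunE.
exists (fun f : {ffun 'I_n -> 'F_2} => \row_k f k) => t _.
  by apply/rowP => k; rewrite !mxE ffunE.
by apply/ffunP => k; rewrite !ffunE mxE.
Qed.

Lemma sum_mulmx_unit {V : nmodType} {n} {A : 'M['F_2]_n} (F : 'rV['F_2]_n -> V) :
  A \in unitmx -> \sum_s F (s *m A) = \sum_t F t.
Proof.
move=> Au; rewrite [RHS](reindex (fun s : 'rV['F_2]_n => s *m A)) //.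
by exists (fun t => t *m invmx A) => s _; rewrite ?mulmxK ?mulmxKV.
Qed.

Definition sgnF2 (R : pzRingType) (b : 'F_2) : R := if b == 0 then 1 else -1.

Section Walsh.
Context {R : pzRingType} {n : nat}.
Implicit Types (p : {ffun 'rV['F_2]_n -> R}) (u s : 'rV['F_2]_n).

Lemma sgnF2D a b : sgnF2 R (a + b) = sgnF2 R a * sgnF2 R b.
Proof.
by rewrite /sgnF2; case: (F2_cases a) => ->; case: (F2_cases b) => ->;
  rewrite ?addr0 ?add0r ?mul1r ?mulr1 ?mulN1r ?opprK.
Qed.

Lemma sgn2E u s : sgn2 R u s = \prod_k sgnF2 R (u 0 k * s 0 k).
Proof.
rewrite /sgn2 /dot2 mxE -/(sgnF2 R _).
rewrite (big_morph (sgnF2 R) sgnF2D (erefl : sgnF2 R 0 = 1)).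
by apply: eq_bigr => k _; rewrite mxE.
Qed.

Lemma walsh0 p : walsh p 0 = \sum_s p s.
Proof.
by apply: eq_bigr => s _; rewrite /sgn2 /dot2 mul0mx mxE eqxx mul1r.
Qed.

Lemma sgn2r0 u : sgn2 R u 0 = 1.
Proof. by rewrite /sgn2 /dot2 trmx0 mulmx0 mxE eqxx. Qed.

Lemma walsh_mulmx_unit (A : 'M['F_2]_n) p u : A \in unitmx ->
  walsh [ffun s => p (s *m A)] (u *m A^T) = walsh p u.
Proof.
move=> Au; rewrite /walsh -(sum_mulmx_unit (fun t => sgn2 R u t * p t) Au).
by apply: eq_bigr => s _; rewrite ffunE /sgn2 /dot2 -mulmxA -trmx_mul.
Qed.

End Walsh.

Lemma acolE {n} (A : 'M['F_2]_n) i : acol A i = 'e_i *m A^T.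
Proof. by rewrite /acol tr_col rowE. Qed.

Lemma distr_at0_le_walsh {R : numDomainType} {n} (p : {ffun 'rV['F_2]_n -> R}) u :
  (forall s, 0 <= p s) -> \sum_s p s = 1 -> p 0 *+ 2 <= 1 + walsh p u.
Proof.
move=> p_ge0 p_sum1; rewrite -p_sum1 /walsh -big_split /= (bigD1 0) //=.
rewrite sgn2r0 mul1r -mulr2n lerDl; apply: sumr_ge0 => s _.
by rewrite /sgn2; case: ifP => _; rewrite ?mul1r ?mulN1r ?subrr ?addr_ge0.
Qed.

Lemma walsh_point0_mix {R : comPzRingType} {n} (a b : R)
    (p : {ffun 'rV['F_2]_n -> R}) u :
  walsh [ffun t => a * (t == 0)%:R + b * p t] u = a + b * walsh p u.
Proof.
rewrite /walsh mulr_sumr.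
under eq_bigr => t _ do rewrite ffunE mulrDr [X in _ + X]mulrCA.
rewrite big_split /= (bigD1 0) //= sgn2r0 eqxx mul1r mulr1 big1 ?addr0 // => t t0.
by rewrite (negbTE t0) !mulr0.
Qed.

Section ProductDistribution.
Context {R : numFieldType} {n : nat} (y : 'I_n -> R).

Definition bernoulli_prod : {ffun 'rV['F_2]_n -> R} :=
  [ffun t : 'rV['F_2]_n => \prod_k (if t 0 k == 0 then 1 - y k else y k)].

Lemma bernoulli_prod_ge0 t : (forall k, 0 <= y k <= 1) -> 0 <= bernoulli_prod t.
Proof.
move=> y01; rewrite ffunE; apply: prodr_ge0 => k _.
by have /andP[y0 y1] := y01 k; case: ifP; rewrite ?subr_ge0.
Qed.

Lemma walsh_bernoulli_prod u :
  walsh bernoulli_prod u = \prod_k (1 - y k + sgnF2 R (u 0 k) * y k).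
Proof.
pose f k b := sgnF2 R (u 0 k * b) * (if b == 0 then 1 - y k else y k).
transitivity (\sum_(t : 'rV['F_2]_n) \prod_k f k (t 0 k)).
  by apply: eq_bigr => t _; rewrite sgn2E ffunE -big_split.
rewrite sum_rV_F2_prod; apply: eq_bigr => k _.
by rewrite /f mulr0 mulr1 /sgnF2 eqxx mul1r oner_eq0.
Qed.

Lemma sum_bernoulli_prod : \sum_t bernoulli_prod t = 1.
Proof.
rewrite -walsh0 walsh_bernoulli_prod big1 // => k _.
by rewrite mxE /sgnF2 eqxx mul1r subrK.
Qed.

Lemma walsh_bernoulli_prod_unit i : walsh bernoulli_prod 'e_i = 1 - y i *+ 2.
Proof.
rewrite walsh_bernoulli_prod (bigD1 i) //= big1 ?mulr1 => [|k ki].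
  by rewrite mxE !eqxx /= /sgnF2 oner_eq0 mulN1r mulr2n opprD addrA.
by move/negbTE: ki => ki; rewrite mxE eqxx /= ki /sgnF2 eqxx mul1r subrK.
Qed.

Lemma bernoulli_prod0 : bernoulli_prod 0 = \prod_k (1 - y k).
Proof. by rewrite ffunE; apply: eq_bigr => k _; rewrite mxE eqxx. Qed.

End ProductDistribution.

Lemma exists_distr_walsh_unit {R : numFieldType} {n} (x : 'I_n -> R) (i0 : 'I_n) :
  -1 <= x i0 -> (forall i, x i0 <= x i <= 1) ->
  exists q : {ffun 'rV['F_2]_n -> R},
    [/\ forall t, 0 <= q t, \sum_t q t = 1, q 0 = 2^-1 + 2^-1 * x i0
      & forall i, walsh q 'e_i = x i].
Proof.
move=> xN1 x_bnd; set m := x i0.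
have m_le1 : m <= 1 by case/andP: (x_bnd i0).
pose al := 2^-1 + 2^-1 * m; pose be := 2^-1 * (1 - m).
(* If m = 1 then y = 0 by the junk value of 1/0; but then be = 0 and all
   x i = 1, so be * y i = (1 - x i)/2 still holds. *)
pose y i := (1 - x i) / (1 - m).
have al_be : al + be = 1 by rewrite /al /be; field.
have al_ge0 : 0 <= al.
  rewrite /al -{1}(mulr1 2^-1) -mulrDr mulr_ge0 ?invr_ge0 ?ler0n //.
  by rewrite -(opprK 1) addrC subr_ge0.
have be_ge0 : 0 <= be by rewrite mulr_ge0 ?invr_ge0 ?ler0n ?subr_ge0.
have be_y i : be * y i = 2^-1 * (1 - x i).
  have [m1|m_neq1] := eqVneq (1 - m) 0; last by rewrite /y /be; field.
  have -> : x i = 1.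
    case/andP: (x_bnd i) => mx x1; apply: le_anti; rewrite x1 /=.
    by move/eqP: m1; rewrite subr_eq0 => /eqP ->.
  by rewrite /be m1 subrr !mulr0 mul0r.
have y01 i : 0 <= y i <= 1.
  case/andP: (x_bnd i) => mx x1.
  rewrite divr_ge0 ?subr_ge0 //=.
  have [m1|m_neq1] := eqVneq (1 - m) 0; first by rewrite /y m1 invr0 mulr0 ler01.
  have m_lt1 : 0 < 1 - m by rewrite lt_def m_neq1 subr_ge0.
  by rewrite /y ler_pdivrMr // mul1r lerB.
exists [ffun t => al * (t == 0)%:R + be * bernoulli_prod y t]; split.
- move=> t; rewrite ffunE.
  by rewrite addr_ge0 ?(mulr_ge0 al_ge0) ?(mulr_ge0 be_ge0) ?ler0n
             ?bernoulli_prod_ge0.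
- by rewrite -[LHS]walsh0 walsh_point0_mix walsh0 sum_bernoulli_prod mulr1 al_be.
- rewrite ffunE eqxx mulr1 bernoulli_prod0 (bigD1 i0) //= mulrA mulrBr mulr1 be_y.
  by rewrite /be subrr mul0r addr0.
- move=> i; rewrite walsh_point0_mix walsh_bernoulli_prod_unit mulrBr mulr1.
  by rewrite mulrnAr be_y /al /be; field.
Qed.

Section Density.
Context {C : numClosedFieldType}.

Lemma adjmxM m k l (M : 'M[C]_(m, k)) (N : 'M[C]_(k, l)) :
  adjmx (M *m N) = adjmx N *m adjmx M.
Proof. by rewrite /adjmx map_mxM trmx_mul. Qed.

Lemma adjmx1 N : adjmx (1%:M : 'M[C]_N) = 1%:M.
Proof. by rewrite /adjmx map_scalar_mx rmorph1 tr_scalar_mx. Qed.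

Lemma adjmxD m k (M N : 'M[C]_(m, k)) : adjmx (M + N) = adjmx M + adjmx N.
Proof. by rewrite /adjmx map_mxD linearD. Qed.

Lemma adjmxN m k (M : 'M[C]_(m, k)) : adjmx (- M) = - adjmx M.
Proof. by rewrite /adjmx map_mxN linearN. Qed.

Lemma psd_trace_ge0 {N} (M : 'M[C]_N) :
  (forall v : 'cV[C]_N, 0 <= (adjmx v *m M *m v) 0 0) -> 0 <= \tr M.
Proof.
move=> M_psd; apply: sumr_ge0 => i _; have := M_psd (delta_mx i 0).
have -> : adjmx (delta_mx i 0 : 'cV[C]_N) = delta_mx 0 i.
  by apply/matrixP => a b; rewrite !mxE; case: (b == i); case: (a == 0);
    rewrite ?conjC1 ?conjC0.
by rewrite -(rowE i M) -colE !mxE.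
Qed.

(* 1 + H is twice a projection, so tr(rho (1 + H)) = tr((1 + H) rho (1 + H)) / 2,
   and (1 + H) rho (1 + H) is positive semidefinite. *)
Lemma density_involution_trace_ge {N} {rho H : 'M[C]_N} :
  density rho -> adjmx H = H -> H *m H = 1%:M -> 0 <= 1 + \tr (rho *m H).
Proof.
move=> [_ rho_psd tr_rho] H_herm HH; set P := 1%:M + H.
have PP : P *m P = P *+ 2.
  by rewrite mulmxDl !mulmxDr HH mul1mx mulmx1 mul1mx mulr2n [H + _]addrC.
have P_herm : adjmx P = P by rewrite adjmxD adjmx1 H_herm.
have : 0 <= \tr (adjmx P *m rho *m P).
  apply: psd_trace_ge0 => v.
  have -> : adjmx v *m (adjmx P *m rho *m P) *m v
           = adjmx (P *m v) *m rho *m (P *m v) by rewrite adjmxM !mulmxA.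
  exact: rho_psd.
rewrite P_herm -mulmxA mxtrace_mulC -mulmxA PP mulmxDr mxtraceD -mulr2n.
by rewrite pmulrn_lge0 // mulmxDr mulmx1 mxtraceD tr_rho.
Qed.

Lemma density_involution_trace_bounded {N} {rho H : 'M[C]_N} :
  density rho -> adjmx H = H -> H *m H = 1%:M -> -1 <= \tr (rho *m H) <= 1.
Proof.
move=> rho_dens H_herm HH.
have ge_P := density_involution_trace_ge rho_dens H_herm HH.
have NH_herm : adjmx (- H) = - H by rewrite adjmxN H_herm.
have NHNH : - H *m - H = 1%:M by rewrite mulNmx mulmxN opprK.
have := density_involution_trace_ge rho_dens NH_herm NHNH.
rewrite mulmxN linearN /= => ge_N.
by rewrite -[-1 <= _]subr_ge0 opprK addrC ge_P -subr_ge0.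
Qed.

Lemma mxprod_hermitian_involution {N n} (F : 'I_n -> 'M[C]_N) :
  (forall j, adjmx (F j) = F j) -> (forall j, F j *m F j = 1%:M) ->
  (forall j k, F j *m F k = F k *m F j) ->
  adjmx (mxprod F) = mxprod F /\ mxprod F *m mxprod F = 1%:M.
Proof.
move=> F_herm FF F_comm; rewrite /mxprod.
suff [-> -> _] : let M := foldr (fun j M => F j *m M) 1%:M (enum 'I_n) in
  [/\ adjmx M = M, M *m M = 1%:M & forall k, F k *m M = M *m F k] by [].
elim: (enum 'I_n) => [|j l [M_herm MM F_commM]] /=.
  by split=> [||k]; rewrite ?adjmx1 ?mul1mx ?mulmx1.
split=> [||k].
- by rewrite adjmxM M_herm F_herm F_commM.
- by rewrite mulmxA -[F j *m _ *m F j]mulmxA -F_commM !mulmxA FF mul1mx MM.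
- by rewrite mulmxA F_comm -mulmxA F_commM mulmxA.
Qed.

Lemma mu_bounded {n} (g : 'I_n -> 'M[C]_(2 ^ n)) rho u :
  stabilizer_generators g -> density rho -> -1 <= mu g rho u <= 1.
Proof.
move=> [g_herm gg g_comm _] rho_dens.
have [] :=
  mxprod_hermitian_involution (fun j => if u 0 j == 0 then 1%:M else g j).
- by move=> j; case: ifP => _; rewrite ?adjmx1 ?g_herm.
- by move=> j; case: ifP => _; rewrite ?mul1mx ?gg.
- by move=> j k; do 2 case: ifP => _; rewrite ?mul1mx ?mulmx1 // g_comm.
exact: density_involution_trace_bounded.
Qed.

End Density.

Theorem proposition2 (C : numClosedFieldType) (n : nat)
  (g : 'I_n -> 'M[C]_(2 ^ n)) (rho : 'M[C]_(2 ^ n)) (A : 'M['F_2]_n) :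
  (0 < n)%N ->
  stabilizer_generators g ->
  density rho ->
  A \in unitmx ->
  forall m : C, is_min_of (fun i => mu g rho (acol A i)) m ->
  is_Fmax g rho A (2^-1 + 2^-1 * m).
Proof.
move=> _ g_stab rho_dens A_unit m [[i0 <-] mu_ge].
set x := fun i => mu g rho (acol A i).
have x_bnd i : -1 <= x i <= 1 by apply: mu_bounded.
have xN1 : -1 <= x i0 by case/andP: (x_bnd i0).
have x_ge i : x i0 <= x i <= 1 by rewrite mu_ge; case/andP: (x_bnd i).
split.
- have [q [q_ge0 q_sum1 q0 q_walsh]] := exists_distr_walsh_unit x i0 xN1 x_ge.
  exists [ffun s => q (s *m A)]; last by rewrite ffunE mul0mx.
  split; first split.
  + by move=> s; rewrite ffunE.
  + rewrite -q_sum1 -(sum_mulmx_unit q A_unit).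
    by apply: eq_bigr => s _; rewrite ffunE.
  + by move=> i; rewrite {1}acolE walsh_mulmx_unit ?q_walsh.
- move=> p [[p_ge0 p_sum1] p_walsh].
  have := @distr_at0_le_walsh _ _ p (acol A i0) p_ge0 p_sum1.
  have -> : 2^-1 + 2^-1 * x i0 = (1 + x i0) / 2 by field.
  by rewrite p_walsh ler_pdivlMr ?ltr0n // mulr_natr.
Qed.
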